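(* Let $\mathcal{T}$ be a $2$-covered $3$-graph on $k\ge7$ vertices such that $\tau(\mathcal{T}[S])\le1$ for every set $S\subseteq V(\mathcal{T})$ with $|S|=7$. Then $\mathcal{T}$ is a star.
   Context: A $3$-graph is $2$-covered if every pair of its vertices is contained in some edge. $\tau(\mathcal{H})$ is the transversal number: the minimum size of a vertex set meeting every edge of $\mathcal{H}$ ($0$ if $\mathcal{H}$ has no edges). $\mathcal{T}[S]$ is the induced subgraph on $S$. A $3$-graph is a star if all its edges contain a common vertex. *)

From mathcomp Require Import all_boot.
Set Implicit Arguments. Unset Strict Implicit. Unset Printing Implicit Defensive.

Definition is_3graph (T : finType) (E : {set {set T}}) : Prop :=
  forall e, e \in E -> #|e| = 3.

Definition two_covered (T : finType) (E : {set {set T}}) : Prop :=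
  forall x y : T, x != y -> exists2 e, e \in E & (x \in e) && (y \in e).

Definition transversal (T : finType) (E : {set {set T}}) (C : {set T}) : bool :=
  [forall e in E, [exists v in e, v \in C]].

(* transversal number: minimum size of a transversal (0 if no edges).
   setT is a transversal whenever all edges are nonempty, so the
   default value #|T| does not affect the minimum. *)
Definition tau (T : finType) (E : {set {set T}}) : nat :=
  \big[minn/#|T|]_(C : {set T} | transversal E C) #|C|.

Definition induced (T : finType) (E : {set {set T}}) (S : {set T}) : {set {set T}} :=
  [set e in E | e \subset S].

Definition is_star (T : finType) (E : {set {set T}}) : Prop :=
  exists v : T, forall e, e \in E -> v \in e.

From Pilot Require Import Defs.
From mathcomp Require Import all_boot.
From mathcomp Require Import zify.

(* Every set of at most 7 vertices lies in a 7-set, whose induced edges are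
   all pierced by one vertex. Two edges, and then three pairwise meeting
   edges, span at most 7 vertices, so any three edges share a vertex; a
   Helly-type argument upgrades this to any four edges. If no vertex lay on
   every edge, an edge {x, y, z} and three edges avoiding x, y and z
   respectively would be four edges without a common vertex. *)
Set Implicit Arguments. Unset Strict Implicit. Unset Printing Implicit Defensive.

Section Basics.

Variable T : finType.
Implicit Types (E F : {set {set T}}) (A B C S : {set T}).

Lemma set3_of_cards3 A : #|A| = 3 -> exists x y z : T, A = [set x; y; z].
Proof.
have [[|x [|y [|z []]]] //= _ _] := cards_eqP A.
by exists x, y, z; apply/setP => w; rewrite !inE orbA.
Qed.

Lemma subset_setU1_cardsD A B x :
  #|A :\: B| <= 1 -> x \in A -> x \notin B -> A \subset x |: B.
Proof.
move=> /card_le1_eqP AB1 xA xB; apply/subsetP => y yA; rewrite !inE.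
have [yB|yB] := boolP (y \in B); first by rewrite orbT.
by rewrite (AB1 y x) ?eqxx // !inE ?xA ?xB ?yA ?yB.
Qed.

Lemma exists_superset_card S n :
  #|S| <= n <= #|T| -> exists2 S' : {set T}, S \subset S' & #|S'| = n.
Proof.
elim: n => [|n IH] /andP[Sn nT].
  by exists S => //; apply/eqP; rewrite -leqn0.
move: Sn; rewrite leq_eqVlt => /predU1P[Sn1|Sn]; first by exists S.
have [|S' SS' S'n] := IH; first by rewrite -ltnS Sn ltnW.
have [x xS'] : exists x, x \notin S'.
  have : 0 < #|~: S'| by have := cardsC S'; lia.
  by case/card_gt0P => x; rewrite inE; exists x.
exists (x |: S'); first exact: subset_trans SS' (subsetU1 x S').
by rewrite cardsU1 xS' S'n.
Qed.

Lemma is_star_subset E F : F \subset E -> is_star E -> is_star F.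
Proof. by move=> /subsetP FE [v Ev]; exists v => e /FE; apply: Ev. Qed.

Lemma induced_subset E S S' : S \subset S' -> induced E S \subset induced E S'.
Proof.
move=> SS'; apply/subsetP => e; rewrite !inE => /andP[-> eS].
exact: subset_trans eS SS'.
Qed.

(* finset's [transversal] (of a partition) shadows the one of Defs. *)
Lemma tau_transversal E n :
  tau E <= n < #|T| -> exists2 C : {set T}, Defs.transversal E C & #|C| <= n.
Proof.
move=> /andP[tauE nT]; apply/exists_inP; apply: contraLR tauE => /exists_inPn big.
rewrite -ltnNge /tau; apply: (big_ind (fun m => n < m)) => //.
  by move=> a b na nb; rewrite leq_min na nb.
by move=> C /big; rewrite -ltnNge.
Qed.

Lemma is_star_transversal E C :
  0 < #|T| -> Defs.transversal E C -> #|C| <= 1 -> is_star E.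
Proof.
move=> /card_gt0P[v0 _] /forall_inP Ecov /card_le1_eqP C1.
have [C0|[v vC]] := set_0Vmem C.
  by exists v0 => e /Ecov /exists_inP[w _]; rewrite C0 inE.
by exists v => e /Ecov /exists_inP[w we wC]; rewrite (C1 w v).
Qed.

End Basics.

Lemma is_star_induced_small (T : finType) (E : {set {set T}}) n :
  1 < n <= #|T| ->
  (forall S : {set T}, #|S| = n -> tau (induced E S) <= 1) ->
  forall S : {set T}, #|S| <= n -> is_star (induced E S).
Proof.
move=> /andP[n1 nT] tau_n S Sn.
have [|S' SS' S'n] := @exists_superset_card _ S n; first by rewrite Sn.
apply: is_star_subset (induced_subset E SS') _.
have [|C C_tr C1] := @tau_transversal _ (induced E S') 1.
  by rewrite tau_n //= (leq_trans n1).
by apply: is_star_transversal C_tr C1; rewrite (ltn_trans _ (leq_trans n1 nT)).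
Qed.

Section EdgesMeet.

Variables (T : finType) (E : {set {set T}}).
Implicit Types (S e : {set T}).
Hypothesis E3 : is_3graph E.
Hypothesis E_small : forall S : {set T}, #|S| <= 7 -> is_star (induced E S).

Lemma common_vertex_small S :
  #|S| <= 7 -> exists v, forall e, e \in E -> e \subset S -> v \in e.
Proof.
by move/E_small=> [v Sv]; exists v => e eE eS; apply: Sv; rewrite inE eE.
Qed.

Lemma edges_meet2 e1 e2 : e1 \in E -> e2 \in E -> exists x, x \in e1 /\ x \in e2.
Proof.
move=> e1E e2E; have [|v Sv] := common_vertex_small (S := e1 :|: e2).
  by rewrite (leq_trans (leq_card_setU e1 e2)) // (E3 e1E) (E3 e2E).
by exists v; rewrite !Sv ?subsetUl ?subsetUr.
Qed.

Lemma edges_meet3 e1 e2 e3 : e1 \in E -> e2 \in E -> e3 \in E ->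
  exists x, [/\ x \in e1, x \in e2 & x \in e3].
Proof.
move=> e1E e2E e3E.
have [a [ae1 ae2]] := edges_meet2 e1E e2E.
have [b [be1 be3]] := edges_meet2 e1E e3E.
have [|v Sv] := common_vertex_small (S := e1 :|: e2 :|: e3).
  have a12 : 0 < #|e1 :&: e2| by apply/card_gt0P; exists a; rewrite inE ae1.
  have b123 : 0 < #|(e1 :|: e2) :&: e3| by apply/card_gt0P; exists b; rewrite !inE be1.
  have := cardsUI e1 e2; have := cardsUI (e1 :|: e2) e3.
  rewrite (E3 e1E) (E3 e2E) (E3 e3E); lia.
by exists v; split; apply: Sv => //; apply/subsetP => w;
  rewrite !inE => ->; rewrite ?orbT.
Qed.

Lemma edges_meet4 e1 e2 e3 e4 :
  e1 \in E -> e2 \in E -> e3 \in E -> e4 \in E ->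
  exists x, [/\ x \in e1, x \in e2, x \in e3 & x \in e4].
Proof.
move=> e1E e2E e3E e4E.
have [x1 [x1e2 x1e3 x1e4]] := edges_meet3 e2E e3E e4E.
have [x2 [x2e1 x2e3 x2e4]] := edges_meet3 e1E e3E e4E.
have [x3 [x3e1 x3e2 x3e4]] := edges_meet3 e1E e2E e4E.
have [x4 [x4e1 x4e2 x4e3]] := edges_meet3 e1E e2E e3E.
have [x1e1|x1e1] := boolP (x1 \in e1); first by exists x1.
have [x2e2|x2e2] := boolP (x2 \in e2); first by exists x2.
have [x3e3|x3e3] := boolP (x3 \in e3); first by exists x3.
have [x4e4|x4e4] := boolP (x4 \in e4); first by exists x4.
have neq_notin f y z : y \in f -> z \notin f -> y != z.
  by move=> yf; apply: contraNneq => <-.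
have sub_x1e1 f y z : f \in E -> x1 \in f -> y \in f -> z \in f ->
    y \in e1 -> z \in e1 -> y != z -> f \subset x1 |: e1.
  move=> fE x1f yf zf ye1 ze1 yz; apply: subset_setU1_cardsD x1f x1e1.
  have f_e1 : 1 < #|f :&: e1|.
    by apply/card_gt1P; exists y, z; rewrite !inE yf ye1 zf ze1.
  by have := cardsID e1 f; rewrite (E3 fE); clear -f_e1; lia.
(* Each of e2, e3, e4 is x1 plus two vertices of e1, so all four edges lie in
   the 4-set x1 |: e1. *)
have [|v Sv] := common_vertex_small (S := x1 |: e1).
  by rewrite cardsU1 (E3 e1E) x1e1.
exists v; split; apply: Sv => //; first exact: subsetUr.
- by apply: (sub_x1e1 _ x3 x4) => //; apply: neq_notin x4e4.
- by apply: (sub_x1e1 _ x2 x4) => //; apply: neq_notin x4e4.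
- by apply: (sub_x1e1 _ x2 x3) => //; apply: neq_notin x3e3.
Qed.

End EdgesMeet.

Lemma is_star_of_meet4 (T : finType) (E : {set {set T}}) :
  0 < #|T| -> is_3graph E ->
  (forall e1 e2 e3 e4, e1 \in E -> e2 \in E -> e3 \in E -> e4 \in E ->
    exists x, [/\ x \in e1, x \in e2, x \in e3 & x \in e4]) ->
  is_star E.
Proof.
move=> /card_gt0P[v0 _] E3 meet4.
have [/existsP[v /forall_inP Ev]|] := boolP [exists v, [forall e in E, v \in e]].
  by exists v.
rewrite negb_exists => /forallP avoid.
have {}avoid v : exists2 f, f \in E & v \notin f.
  by have /forall_inPn[f fE vf] := avoid v; exists f.
have [e eE _] := avoid v0.
have [x [y [z e_xyz]]] := set3_of_cards3 (E3 e eE).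
have [fx fxE xfx] := avoid x.
have [fy fyE yfy] := avoid y.
have [fz fzE zfz] := avoid z.
have [w [we wfx wfy wfz]] := meet4 _ _ _ _ eE fxE fyE fzE.
move: we; rewrite e_xyz !inE -orbA => /or3P[] /eqP wE.
- by case/negP: xfx; rewrite -wE.
- by case/negP: yfy; rewrite -wE.
- by case/negP: zfz; rewrite -wE.
Qed.

Theorem lemma4p4 (T : finType) (E : {set {set T}}) :
  is_3graph E -> two_covered E -> 7 <= #|T| ->
  (forall S : {set T}, #|S| = 7 -> tau (induced E S) <= 1) ->
  is_star E.
Proof.
move=> E3 _ T7 tau7.
have E_small : forall S : {set T}, #|S| <= 7 -> is_star (induced E S).
  by apply: is_star_induced_small tau7; rewrite T7.
apply: is_star_of_meet4 E3 (edges_meet4 E3 E_small).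
exact: leq_trans T7.
Qed.
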